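(* Let $k\ge 0$ and let $G=L_k$, of order $n=4k+6$. Then (a) $\gamma_t(G)=(n+2)/2$. Moreover, if $k\ge1$ and $w\in\{v_1,v_2,v_3\}$ (the three subdivision vertices on the path $a_1v_1v_2v_3c_1$), then (b) $\gamma_t(G-w)=n/2$ and (c) $\gamma_t^a(G;w)=n/2$.
   Context: For a graph $G$ with no isolated vertex, a total dominating set (TD-set) is a set $S\subseteq V(G)$ such that every vertex of $G$ is adjacent to some vertex of $S$; $\gamma_t(G)$ is the minimum cardinality of a TD-set. For a vertex $v$ of $G$, an almost total dominating set (ATD-set) of $G$ with respect to $v$ is a set $S\subseteq V(G)$ with $v\in S$ such that every vertex different from $v$ is adjacent to a vertex of $S$ and $v$ has no neighbor in $S$; $\gamma_t^a(G;v)$ is its minimum cardinality. For $k\ge 1$, $G_k$ is the graph with vertex set $\{a_i,b_i,c_i,d_i:1\le i\le k\}$ whose edges are: the edges of the path $a_1b_1a_2b_2\cdots a_kb_k$, the edges of the path $c_1d_1c_2d_2\cdots c_kd_k$, the edges $a_id_i$ and $b_ic_i$ for every $1\le i\le k$, and the two edges $a_1c_1$ and $b_kd_k$. $F_k$ ($k\ge1$) is obtained from $G_k$ by replacing the edge $a_1c_1$ by a path $a_1v_1v_2v_3c_1$ through three new vertices $v_1,v_2,v_3$. $L_0=C_6$, and for $k\ge1$, $L_k$ is obtained from $F_k$ by replacing the edge $b_kd_k$ by a path $b_ku_1u_2u_3d_k$ through three new vertices $u_1,u_2,u_3$. *)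

From mathcomp Require Import all_boot.
Set Implicit Arguments. Unset Strict Implicit. Unset Printing Implicit Defensive.

Section Dom.
Variable T : finType.

Definition is_TD_in (e : rel T) (D S : {set T}) : bool :=
  (S \subset D) && [forall x in D, [exists y in S, e x y]].

(* gamma_t of the induced subgraph on D: minimum size of a TD-set.
   (Default #|T|.+1 if no TD-set exists; never used for graphs without
   isolated vertices.) *)
Definition gamma_t_in (e : rel T) (D : {set T}) : nat :=
  \big[minn/#|T|.+1]_(S : {set T} | is_TD_in e D S) #|S|.

Definition gamma_t (e : rel T) : nat := gamma_t_in e [set: T].

Definition is_ATD (e : rel T) (v : T) (S : {set T}) : bool :=
  [&& v \in S,
      [forall x, (x != v) ==> [exists y in S, e x y]] &
      [forall y in S, ~~ e v y]].

Definition gamma_ta (e : rel T) (v : T) : nat :=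
  \big[minn/#|T|.+1]_(S : {set T} | is_ATD e v S) #|S|.
End Dom.

(* Vertices: inl (i, p) with i : 'I_k (0-based index i <-> paper's i+1) and
   p = 0,1,2,3 standing for a_i, b_i, c_i, d_i;
   inr r with r = 0,1,2 standing for v_1,v_2,v_3 and r = 3,4,5 for u_1,u_2,u_3.
   For k = 0 only the six inr vertices exist and they form the cycle C_6. *)
Definition Lvert (k : nat) : finType := ('I_k * 'I_4 + 'I_6)%type.

Definition Larc (k : nat) (x y : Lvert k) : bool :=
  match x, y with
  | inl (i, p), inl (j, q) =>
      [|| [&& p == 0 :> nat, q == 1 :> nat & i == j :> nat]      (* a_i b_i *)
        , [&& p == 1 :> nat, q == 0 :> nat & j == i.+1 :> nat]   (* b_i a_{i+1} *)
        , [&& p == 2 :> nat, q == 3 :> nat & i == j :> nat]      (* c_i d_i *)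
        , [&& p == 3 :> nat, q == 2 :> nat & j == i.+1 :> nat]   (* d_i c_{i+1} *)
        , [&& p == 0 :> nat, q == 3 :> nat & i == j :> nat]      (* a_i d_i *)
        | [&& p == 1 :> nat, q == 2 :> nat & i == j :> nat] ]    (* b_i c_i *)
  | inl (i, p), inr r =>
      [|| [&& p == 0 :> nat, i == 0 :> nat & r == 0 :> nat]      (* a_1 v_1 *)
        , [&& p == 2 :> nat, i == 0 :> nat & r == 2 :> nat]      (* c_1 v_3 *)
        , [&& p == 1 :> nat, i == k.-1 :> nat & r == 3 :> nat]   (* b_k u_1 *)
        | [&& p == 3 :> nat, i == k.-1 :> nat & r == 5 :> nat] ] (* d_k u_3 *)
  | inr r, inr s =>
      [|| (r == 0 :> nat) && (s == 1 :> nat)                     (* v_1 v_2 *)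
        , (r == 1 :> nat) && (s == 2 :> nat)                     (* v_2 v_3 *)
        , (r == 3 :> nat) && (s == 4 :> nat)                     (* u_1 u_2 *)
        , (r == 4 :> nat) && (s == 5 :> nat)                     (* u_2 u_3 *)
        | (k == 0) && (((r == 2 :> nat) && (s == 3 :> nat))
                       || ((r == 5 :> nat) && (s == 0 :> nat))) ] (* close C_6 *)
  | inr _, inl _ => false
  end.

Definition Ladj (k : nat) : rel (Lvert k) := fun x y => Larc x y || Larc y x.

(* the subdivision vertex v_j (j = 1,2,3 <-> j : 'I_3 = 0,1,2) *)
Definition Lv (k : nat) (j : 'I_3) : Lvert k :=
  inr (widen_ord (isT : 3 <= 6) j).

From mathcomp Require Import all_boot zify.
Set Implicit Arguments. Unset Strict Implicit. Unset Printing Implicit Defensive.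

(* L_k (k >= 1) is a ladder of k columns {a_i, b_i, c_i, d_i} closed at the
   left by the path v1 v2 v3 (from a_1 to c_1) and at the right by the path
   u1 u2 u3 (from b_k to d_k); L_0 is the cycle C_6.

   Upper bounds are explicit sets (columns {a,b} or {b,c} plus a few gadget
   vertices), checked by finite case analysis.  Lower bounds only use that a
   set S "dominates" vertices (each has a neighbour in S): a TD-set of L_k
   dominates everything, while a TD-set of L_k - w and an ATD-set with
   respect to w both dominate everything except w.  Counting per column:
   if column i > 0 contains neither b_i nor d_i, then a_i and c_i force both
   b_{i-1} and d_{i-1} into S (and symmetrically for a, c going right).  The
   resulting chain inequality gives about 2k vertices in the ladder, up to
   boundary corrections which are paid for by the gadget vertices: at least 2
   on the right, and 2 (all dominated) or 1 (all but some v_j dominated) on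
   the left. *)

Section Domination.
Variable T : finType.
Implicit Types (e : rel T) (D S : {set T}).

Definition dominated e S (x : T) : bool := [exists y in S, e x y].

Lemma TD_in_dominated e D S : is_TD_in e D S -> {in D, forall x, dominated e S x}.
Proof. by case/andP=> _ /forallP dom x; apply/implyP/dom. Qed.

Lemma ATD_dominated e v S : is_ATD e v S -> forall x, x != v -> dominated e S x.
Proof. by case/and3P=> _ /forallP dom _ x; apply/implyP/dom. Qed.

Lemma min_card_eq (P : pred {set T}) S0 m :
  P S0 -> #|S0| = m -> (forall S, P S -> m <= #|S|) ->
  \big[minn/#|T|.+1]_(S | P S) #|S| = m.
Proof.
move=> PS0 <- low; apply/eqP; rewrite eqn_leq; apply/andP; split.
  rewrite unlock; elim: (index_enum _) (mem_index_enum S0) => //= S r IHr.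
  rewrite inE => /predU1P [<-|/IHr S0r]; first by rewrite PS0 geq_minl.
  by case: (P S); rewrite // geq_min S0r orbT.
elim/big_ind: _ => [|x y|S /low //]; first exact: leqW (max_card _).
by rewrite leq_min => -> ->.
Qed.

End Domination.

Lemma chain_sum (x : nat -> nat) k : 0 < k -> (forall i, x i <= 2) ->
  (forall i, 0 < i < k -> x i = 0 -> x i.-1 = 2) ->
  k + (x k.-1 == 2) <= \sum_(i < k) x i + (x 0 == 0).
Proof.
elim: k => [//|[|k] IHk] _ le_x2 zero_prev2.
  by rewrite big_ord1 /=; case: (x 0) (le_x2 0) => [|[|[|]]].
have IH := IHk isT le_x2 (fun i lt_i => zero_prev2 i ltac:(lia)).
rewrite big_ord_recr /=; have := le_x2 k.+1; have := le_x2 k.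
case: (x k.+1 =P 0) => [xk0 | xk_neq0]; last by simpl in IH; lia.
have /= := zero_prev2 k.+1 (ltnSn _) xk0; simpl in IH; lia.
Qed.

Lemma chain_sum_rev (y : nat -> nat) k : 0 < k -> (forall i, y i <= 2) ->
  (forall i, i.+1 < k -> y i = 0 -> y i.+1 = 2) ->
  k + (y 0 == 2) <= \sum_(i < k) y i + (y k.-1 == 0).
Proof.
move=> k_gt0 le_y2 zero_next2.
have := @chain_sum (fun i => y (k.-1 - i)) k k_gt0 (fun i => le_y2 _).
rewrite subn0 subnn (reindex_inj rev_ord_inj) /=.
have -> : \sum_(i < k) y (k.-1 - (k - i.+1)) = \sum_(i < k) y i.
  by apply: eq_bigr => i _; congr y; have := ltn_ord i; lia.
apply=> i /andP [i_gt0 lt_ik] y0.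
have -> : k.-1 - i.-1 = (k.-1 - i).+1 by lia.
by apply: zero_next2 y0; lia.
Qed.

Notation Pa := (@Ordinal 4 0 isT).
Notation Pb := (@Ordinal 4 1 isT).
Notation Pc := (@Ordinal 4 2 isT).
Notation Pd := (@Ordinal 4 3 isT).
Notation V1 := (@Ordinal 6 0 isT).
Notation V2 := (@Ordinal 6 1 isT).
Notation V3 := (@Ordinal 6 2 isT).
Notation U1 := (@Ordinal 6 3 isT).
Notation U2 := (@Ordinal 6 4 isT).
Notation U3 := (@Ordinal 6 5 isT).

Lemma pos_cases (p : 'I_4) : [\/ p = Pa, p = Pb, p = Pc | p = Pd].
Proof.
case: p => [[|[|[|[|p]]]] lt_p4] //;
  [apply: Or41 | apply: Or42 | apply: Or43 | apply: Or44]; exact: val_inj.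
Qed.

Lemma gadget_cases (r : 'I_6) :
  r = V1 \/ r = V2 \/ r = V3 \/ r = U1 \/ r = U2 \/ r = U3.
Proof.
case: r => [[|[|[|[|[|[|r]]]]]] lt_r6] //;
  [left | right; left | do 2 right; left | do 3 right; left | do 4 right; left
  | do 5 right]; exact: val_inj.
Qed.

Lemma sum_positions (F : 'I_4 -> nat) : \sum_p F p = F Pa + F Pb + F Pc + F Pd.
Proof.
rewrite !big_ord_recl big_ord0 addn0 !addnA.
by congr (F _ + F _ + F _ + F _); apply: val_inj.
Qed.

Lemma sum_gadget (F : 'I_6 -> nat) :
  \sum_r F r = F V1 + F V2 + F V3 + F U1 + F U2 + F U3.
Proof.
rewrite !big_ord_recl big_ord0 addn0 !addnA.
by congr (F _ + F _ + F _ + F _ + F _ + F _); apply: val_inj.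
Qed.

Lemma card_Lvert k : #|Lvert k| = 4 * k + 6.
Proof. by rewrite card_sum card_prod !card_ord mulnC. Qed.

Section Columns.
Variables (k : nat) (S : {set Lvert k}).

(* [S] contains the vertex at position [p] of column [i]; the column is a
   plain natural number (out-of-range columns are empty), so that the
   neighbouring columns i.-1 and i.+1 need no ordinal bookkeeping. *)
Definition in_col (p : 'I_4) (i : nat) : bool :=
  [exists j : 'I_k, (j == i :> nat) && (inl (j, p) \in S)].

Lemma in_colE p (j : 'I_k) : in_col p j = (inl (j, p) \in S).
Proof.
apply/existsP/idP => [[j' /andP [/eqP /val_inj -> //]] | Sj].
by exists j; rewrite eqxx.
Qed.

Lemma in_col_out p i : k <= i -> in_col p i = false.
Proof.
by move=> le_k_i; apply/existsP => -[j /andP [/eqP eq_ji _]]; have := ltn_ord j; lia.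
Qed.

Definition bd_count (i : nat) : nat := in_col Pb i + in_col Pd i.
Definition ac_count (i : nat) : nat := in_col Pa i + in_col Pc i.
Definition left_count : nat := (inr V1 \in S) + (inr V2 \in S) + (inr V3 \in S).
Definition right_count : nat := (inr U1 \in S) + (inr U2 \in S) + (inr U3 \in S).

Lemma card_columns :
  #|S| = \sum_(i < k) (bd_count i + ac_count i) + left_count + right_count.
Proof.
rewrite -sum1_card big_mkcond big_sumType sum_gadget /left_count /right_count /= !addnA.
congr (_ + _ + _ + _ + _ + _ + _); try by case: (_ \in S).
have -> : \sum_(p : 'I_k * 'I_4) (if inl p \in S then 1 else 0) =
          \sum_i \sum_p nat_of_bool (inl (i, p) \in S).
  by rewrite pair_bigA; apply: eq_bigr => -[i p] _; case: (_ \in S).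
apply: eq_bigr => i _.
by rewrite sum_positions /bd_count /ac_count !in_colE [RHS]addnC addnACA addnA.
Qed.

End Columns.

Ltac solve_neighbours :=
  let y := fresh "y" in let Sy := fresh "Sy" in let adj := fresh "adj" in
  let q := fresh "q" in let r := fresh "r" in let Sq := fresh "Sq" in
  case/existsP => -[[y q]|r] /andP [Sy adj];
  [ case: (pos_cases q) Sy adj => -> Sy; have Sq := Sy; rewrite -in_colE in Sq
  | case: (gadget_cases r) Sy adj => [->|[->|[->|[->|[->|->]]]]] Sq ];
  rewrite /Ladj /= => adj; move: Sq adj;
  repeat match goal with
  | |- context [nat_of_ord ?j] => move: (nat_of_ord j) => ?
  end; move=> Sq adj;
  repeat match goal with
  | H : is_true false |- _ => discriminate H
  | H : is_true (_ || _) |- _ => case/orP: H => H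
  | H : is_true (_ && _) |- _ => let H' := fresh in case/andP: H => H H'
  | H : is_true (_ == _) |- _ => move/eqP: H => H; subst
  end; by rewrite /= ?Sq ?eqxx ?orbT ?andbT.

Section Neighbours.
Variables (k : nat) (S : {set Lvert k}).
Local Notation dom := (dominated (@Ladj k) S).

Lemma neighbours_a (j : 'I_k) : dom (inl (j, Pa)) ->
  [|| in_col S Pb j, in_col S Pd j, (0 < j) && in_col S Pb j.-1
    | (j == 0 :> nat) && (inr V1 \in S)].
Proof. solve_neighbours. Qed.

Lemma neighbours_b (j : 'I_k) : dom (inl (j, Pb)) ->
  [|| in_col S Pa j, in_col S Pc j, in_col S Pa j.+1
    | (j == k.-1 :> nat) && (inr U1 \in S)].
Proof. solve_neighbours. Qed.

Lemma neighbours_c (j : 'I_k) : dom (inl (j, Pc)) ->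
  [|| in_col S Pb j, in_col S Pd j, (0 < j) && in_col S Pd j.-1
    | (j == 0 :> nat) && (inr V3 \in S)].
Proof. solve_neighbours. Qed.

Lemma neighbours_d (j : 'I_k) : dom (inl (j, Pd)) ->
  [|| in_col S Pa j, in_col S Pc j, in_col S Pc j.+1
    | (j == k.-1 :> nat) && (inr U3 \in S)].
Proof. solve_neighbours. Qed.

Lemma neighbours_v1 : dom (inr V1) ->
  [|| inr V2 \in S, in_col S Pa 0 | (k == 0) && (inr U3 \in S)].
Proof. solve_neighbours. Qed.

Lemma neighbours_v2 : dom (inr V2) -> (inr V1 \in S) || (inr V3 \in S).
Proof. solve_neighbours. Qed.

Lemma neighbours_v3 : dom (inr V3) ->
  [|| inr V2 \in S, in_col S Pc 0 | (k == 0) && (inr U1 \in S)].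
Proof. solve_neighbours. Qed.

Lemma neighbours_u1 : dom (inr U1) ->
  [|| inr U2 \in S, in_col S Pb k.-1 | (k == 0) && (inr V3 \in S)].
Proof. solve_neighbours. Qed.

Lemma neighbours_u2 : dom (inr U2) -> (inr U1 \in S) || (inr U3 \in S).
Proof. solve_neighbours. Qed.

Lemma neighbours_u3 : dom (inr U3) ->
  [|| inr U2 \in S, in_col S Pd k.-1 | (k == 0) && (inr V1 \in S)].
Proof. solve_neighbours. Qed.

End Neighbours.

Ltac by_bool_cases :=
  repeat match goal with
  | |- context [in_col ?S ?p ?i] => case: (in_col S p i)
  | |- context [inr ?r \in ?S] => case: (inr r \in S)
  end; done.

Section LowerBounds.
Variables (m : nat) (S : {set Lvert m.+1}).
Local Notation dom := (dominated (@Ladj m.+1) S).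

Section DominatedLadder.
Hypothesis dom_ladder : forall (j : 'I_m.+1) p, dom (inl (j, p)).

(* A column without b and d forces b and d in the previous column. *)
Lemma bd_chain :
  m.+1 + (bd_count S m == 2) <= \sum_(i < m.+1) bd_count S i + (bd_count S 0 == 0).
Proof.
apply: chain_sum => // [i | [//|i] /= lt_im].
  by rewrite /bd_count; case: in_col; case: in_col.
have := neighbours_a (dom_ladder (Ordinal lt_im) Pa).
have := neighbours_c (dom_ladder (Ordinal lt_im) Pc).
rewrite /bd_count /=; lia.
Qed.

(* A column without a and c forces a and c in the next column. *)
Lemma ac_chain :
  m.+1 + (ac_count S 0 == 2) <= \sum_(i < m.+1) ac_count S i + (ac_count S m == 0).
Proof.
apply: chain_sum_rev => // [i | i lt_im].
  by rewrite /ac_count; case: in_col; case: in_col.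
have lt_i : i < m.+1 by lia.
have := neighbours_b (dom_ladder (Ordinal lt_i) Pb).
have := neighbours_d (dom_ladder (Ordinal lt_i) Pd).
rewrite /ac_count /=; lia.
Qed.

End DominatedLadder.

Lemma right_end :
  dom (inl (ord_max, Pb)) -> dom (inl (ord_max, Pd)) ->
  dom (inr U1) -> dom (inr U2) -> dom (inr U3) ->
  2 + (ac_count S m == 0) <= right_count S + (bd_count S m == 2).
Proof.
move=> /neighbours_b nb_b /neighbours_d nb_d /neighbours_u1 nb_u1
  /neighbours_u2 nb_u2 /neighbours_u3 nb_u3.
rewrite /= !(@in_col_out _ _ _ m.+1) // eqxx /= ?orbF in nb_b nb_d nb_u1 nb_u3.
move: nb_b nb_d nb_u1 nb_u2 nb_u3; rewrite /right_count /ac_count /bd_count.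
by_bool_cases.
Qed.

Local Notation left_gadget := [set inr V1; inr V2; inr V3].

Lemma ladder_bound c : (forall x, x \notin left_gadget -> dom x) ->
  c + (bd_count S 0 == 0) <= left_count S + (ac_count S 0 == 2) ->
  2 * m.+1 + 2 + c <= #|S|.
Proof.
move=> dom_off left_end.
have dom_ladder (j : 'I_m.+1) p : dom (inl (j, p)) by apply: dom_off; rewrite !inE.
have dom_u (r : 'I_6) : 3 <= r -> dom (inr r).
  by case: r => [[|[|[|r]]] lt_r6] // _; apply: dom_off; rewrite !inE.
rewrite card_columns big_split /=.
have := right_end (dom_ladder _ _) (dom_ladder _ _)
  (dom_u U1 isT) (dom_u U2 isT) (dom_u U3 isT).
have := bd_chain dom_ladder; have := ac_chain dom_ladder.
set X := \sum_(i < m.+1) bd_count S i; set Y := \sum_(i < m.+1) ac_count S i; lia.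
Qed.

Lemma left_end_all : (forall x, dom x) ->
  2 + (bd_count S 0 == 0) <= left_count S + (ac_count S 0 == 2).
Proof.
move=> dom_all.
have := neighbours_a (dom_all (inl (ord0, Pa))).
have := neighbours_c (dom_all (inl (ord0, Pc))).
have := neighbours_v1 (dom_all _); have := neighbours_v2 (dom_all _).
have := neighbours_v3 (dom_all _).
rewrite /= ?orbF /left_count /ac_count /bd_count; by_bool_cases.
Qed.

Lemma left_end_but (w : 'I_6) : w < 3 -> (forall x, x != inr w -> dom x) ->
  1 + (bd_count S 0 == 0) <= left_count S + (ac_count S 0 == 2).
Proof.
move=> w_lt3 dom_but.
have dom_v (r : 'I_6) : r != w -> dom (inr r).
  by move=> ne_rw; apply: dom_but; apply: contra ne_rw => /eqP [->].
have nb_v1 : (V1 != w) ==> [|| inr V2 \in S, in_col S Pa 0 | false].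
  by apply/implyP => /dom_v /neighbours_v1.
have nb_v2 : (V2 != w) ==> (inr V1 \in S) || (inr V3 \in S).
  by apply/implyP => /dom_v /neighbours_v2.
have nb_v3 : (V3 != w) ==> [|| inr V2 \in S, in_col S Pc 0 | false].
  by apply/implyP => /dom_v /neighbours_v3.
have := neighbours_a (dom_but (inl (ord0, Pa)) isT).
have := neighbours_c (dom_but (inl (ord0, Pc)) isT).
move: nb_v1 nb_v2 nb_v3; rewrite /left_count /ac_count /bd_count /= ?orbF.
by case: (gadget_cases w) w_lt3 => [|[|[|[|[|]]]]] -> //= _; by_bool_cases.
Qed.

Lemma dominating_lower : (forall x, dom x) -> 2 * m.+1 + 4 <= #|S|.
Proof.
move=> dom_all; rewrite -[4]/(2 + 2) addnA.
by apply: ladder_bound (left_end_all dom_all) => x _.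
Qed.

Lemma dominating_but_lower (w : 'I_6) : w < 3 ->
  (forall x, x != inr w -> dom x) -> 2 * m.+1 + 3 <= #|S|.
Proof.
move=> w_lt3 dom_but; rewrite -[3]/(2 + 1) addnA.
apply: ladder_bound (left_end_but w_lt3 dom_but) => x x_off.
apply: dom_but; apply: contraNN x_off => /eqP ->.
by case: (gadget_cases w) w_lt3 => [|[|[|[|[|]]]]] -> //= _; rewrite !inE eqxx ?orbT.
Qed.

End LowerBounds.

Lemma cycle_lower (S : {set Lvert 0}) :
  (forall x, dominated (@Ladj 0) S x) -> 4 <= #|S|.
Proof.
move=> dom_all; rewrite card_columns big_ord0 /left_count /right_count.
have := neighbours_v1 (dom_all _); have := neighbours_v2 (dom_all _).
have := neighbours_v3 (dom_all _); have := neighbours_u1 (dom_all _).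
have := neighbours_u2 (dom_all _); have := neighbours_u3 (dom_all _).
rewrite !in_col_out //; by_bool_cases.
Qed.

Definition Lset k (col : nat -> nat -> bool) (gadget : nat -> bool) : {set Lvert k} :=
  [set x : Lvert k | match x with inl (j, p) => col j p | inr r => gadget r end].

Lemma card_Lset k col gadget : #|Lset k col gadget| =
  \sum_(i < k) (col i 1 + col i 3 + (col i 0 + col i 2))
  + (gadget 0 + gadget 1 + gadget 2) + (gadget 3 + gadget 4 + gadget 5).
Proof.
rewrite card_columns /left_count /right_count !inE; congr (_ + _ + _).
by apply: eq_bigr => i _; rewrite /bd_count /ac_count !in_colE !inE.
Qed.

(* A TD-set of L_k: columns {a, b} together with v2, v3, u2, u3. *)
Definition td_witness k : {set Lvert k} :=
  Lset k (fun _ p => p < 2) (fun r => r \in [:: 1; 2; 4; 5]).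

Definition td_but_witness k (j : nat) : {set Lvert k} :=
  match j with
  | 0 => Lset k (fun _ p => p \in [:: 1; 2]) (fun r => r \in [:: 2; 4; 5])
  | 1 => Lset k (fun i p => (p < 2) || (i == 0) && (p == 2)) (fun r => r \in [:: 4; 5])
  | _ => Lset k (fun _ p => p < 2) (fun r => r \in [:: 0; 4; 5])
  end.

Definition atd_witness k (j : nat) : {set Lvert k} :=
  Lset k (fun _ p => if j == 0 then p \in [:: 1; 2] else p < 2)
         (fun r => r \in [:: j; 4; 5]).

Tactic Notation "dominate_by" uconstr(y) :=
  apply/existsP; refine (ex_intro _ y _);
  by rewrite !inE /Ladj /= ?eqxx /= ?orbT ?andbT.

Ltac dominate_all :=
  let x := fresh "x" in
  let j := fresh "j" in let p := fresh "p" in let r := fresh "r" in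
  let inD := fresh "inD" in
  apply/forallP => x; apply/implyP; move: x;
  case=> [[j p]|r] inD;
  [ case: (pos_cases p) inD => -> inD
  | case: (gadget_cases r) inD => [->|[->|[->|[->|[->|->]]]]] inD ];
  first [ by rewrite !inE ?(inj_eq inr_inj) in inD
        | dominate_by (inl (j, Pa)) | dominate_by (inl (j, Pb))
        | dominate_by (inl (j, Pc)) | dominate_by (inl (j, Pd))
        | dominate_by (inr V1) | dominate_by (inr V2) | dominate_by (inr V3)
        | dominate_by (inr U1) | dominate_by (inr U2) | dominate_by (inr U3)
        | dominate_by (inl (ord0, Pa)) | dominate_by (inl (ord0, Pc)) ].

Ltac avoids_excluded :=
  let i := fresh "i" in let p := fresh "p" in let r := fresh "r" in
  let inS := fresh "inS" in
  apply/subsetP => -[[i p]|r]; rewrite !inE ?(inj_eq inr_inj) => inS //;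
  by case: (gadget_cases r) inS => [|[|[|[|[|]]]]] -> inS.

Ltac no_neighbour_in :=
  let i := fresh "i" in let p := fresh "p" in let r := fresh "r" in
  apply/forallP => -[[i p]|r]; apply/implyP; rewrite !inE;
  [ case: (pos_cases p) => -> | case: (gadget_cases r) => [->|[->|[->|[->|[->|->]]]]] ];
  by rewrite /Ladj /= ?orbF ?andbF.

Lemma td_witnessP k : is_TD_in (@Ladj k) [set: Lvert k] (td_witness k).
Proof.
apply/andP; split; first exact: subsetT.
by rewrite /td_witness /Lset; dominate_all.
Qed.

Lemma td_but_witnessP m (j : 'I_3) :
  is_TD_in (@Ladj m.+1) [set~ Lv m.+1 j] (td_but_witness m.+1 j).
Proof.
case: j => [[|[|[|j]]] lt_j3] //; rewrite /Lv /td_but_witness /Lset /=.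
all: by apply/andP; split; [avoids_excluded | dominate_all].
Qed.

Lemma atd_witnessP m (j : 'I_3) :
  is_ATD (@Ladj m.+1) (Lv m.+1 j) (atd_witness m.+1 j).
Proof.
case: j => [[|[|[|j]]] lt_j3] //; rewrite /Lv /atd_witness /Lset /=.
all: apply/and3P; split; [by rewrite !inE | dominate_all | no_neighbour_in].
Qed.

Lemma card_td_witness k : #|td_witness k| = 2 * k + 4.
Proof.
by rewrite card_Lset !inE (eq_bigr (fun=> 2)) // sum_nat_const card_ord mulnC -addnA.
Qed.

Lemma card_td_but_witness m (j : 'I_3) : #|td_but_witness m.+1 j| = 2 * m.+1 + 3.
Proof.
case: j => [[|[|[|j]]] lt_j3] //; rewrite card_Lset !inE.
- by rewrite (eq_bigr (fun=> 2)) // sum_nat_const card_ord mulnC -addnA.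
- rewrite big_ord_recl (eq_bigr (fun=> 2)) // sum_nat_const card_ord /=; lia.
- by rewrite (eq_bigr (fun=> 2)) // sum_nat_const card_ord mulnC -addnA.
Qed.

Lemma card_atd_witness k (j : 'I_3) : #|atd_witness k j| = 2 * k + 3.
Proof.
case: j => [[|[|[|j]]] lt_j3] //; rewrite card_Lset !inE.
all: by rewrite (eq_bigr (fun=> 2)) // sum_nat_const card_ord mulnC -addnA.
Qed.

Theorem mainTheorem4 (k : nat) :
  let n := #|Lvert k| in
  gamma_t (@Ladj k) = (n + 2) %/ 2 /\
  (1 <= k -> forall j : 'I_3,
     gamma_t_in (@Ladj k) [set~ Lv k j] = n %/ 2 /\
     gamma_ta (@Ladj k) (Lv k j) = n %/ 2).
Proof.
rewrite /= card_Lvert.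
have -> : (4 * k + 6 + 2) %/ 2 = 2 * k + 4 by lia.
have -> : (4 * k + 6) %/ 2 = 2 * k + 3 by lia.
split.
  apply: min_card_eq (td_witnessP k) (card_td_witness k) _ => S /TD_in_dominated dom.
  have dom_all x : dominated (@Ladj k) S x by apply: dom; rewrite inE.
  by case: k S dom dom_all => [|m] S _; [apply: cycle_lower | apply: dominating_lower].
case: k => // m _ j; have lt_j3 : widen_ord (isT : 3 <= 6) j < 3 := ltn_ord j.
split.
  apply: min_card_eq (td_but_witnessP m j) (card_td_but_witness m j) _.
  move=> S /TD_in_dominated dom; apply: (dominating_but_lower lt_j3) => x x_ne.
  by apply: dom; rewrite !inE.
apply: min_card_eq (atd_witnessP m j) (card_atd_witness m.+1 j) _.
by move=> S /ATD_dominated; apply: dominating_but_lower.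
Qed.
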